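(* Let $G$ be a finite nonabelian group and let $N$ be a normal subgroup of $G$. Then either $K(G)\le N$, or both $N\le Z(G)$ and $Z(G/N)=Z(G)/N$.
   Context: All groups are finite. For $\chi\in\mathrm{Irr}(G)$, the center of $\chi$ is $Z(\chi)=\{g\in G : |\chi(g)|=\chi(1)\}$; equivalently $Z(\chi)/\ker(\chi)=Z(G/\ker(\chi))$. For a nonabelian group $G$, let $\mathcal{X}=\{\chi\in\mathrm{Irr}(G) : Z(\chi)>Z(G)\}$ (strict containment) and define $K(G)=\bigcap_{\chi\in\mathcal{X}}\ker(\chi)$. If $G$ is abelian, set $K(G)=G$. *)

From mathcomp Require Import all_boot all_order all_algebra all_fingroup all_solvable all_field all_character.
Set Implicit Arguments.
Unset Strict Implicit.
Unset Printing Implicit Defensive.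
Import GroupScope.

(* The intersection is taken inside G (empty intersection = G). *)
Local Open Scope ring_scope.
Definition Kgrp (gT : finGroupType) (G : {group gT}) : {set gT} :=
  if abelian G then G
  else (G :&: \bigcap_(i : Iirr G | ('Z(G) \proper cfcenter 'chi[G]_i)%g)
          cfker 'chi[G]_i)%g.

From mathcomp Require Import all_boot all_order all_algebra all_fingroup all_solvable all_field all_character.
Import GroupScope.

(* Write Z_N for the full preimage in G of Z(G/N); it always contains Z(G).
   An irreducible character chi whose kernel contains N has Z(chi) equal to
   the preimage of Z(G/ker chi), hence Z(chi) contains Z_N.  So if Z(G) < Z_N,
   every such chi contributes to K(G), and K(G) lies in the intersection of
   their kernels, which is N.  Otherwise Z_N = Z(G), so that N <= Z(G) and
   Z(G/N) = Z_N/N = Z(G)/N. *)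

Section CenterPreimage.

Variables (gT : finGroupType) (G : {group gT}).

Lemma sub_cosetpre_center (N : {group gT}) (H : {set gT}) : N <| G ->
  (H \subset coset N @*^-1 'Z(G / N)) = (H \subset G) && ([~: H, G] \subset N).
Proof.
move=> nsNG; have nNG := normal_norm nsNG.
have [sHG | nsHG] := boolP (H \subset G); last first.
  apply/negbTE; apply: contra nsHG => /subset_trans; apply.
  by rewrite -{2}(quotientGK nsNG) morphpreS ?center_sub.
have nNH := subset_trans sHG nNG.
by rewrite -sub_quotient_pre // subsetI quotientS // quotient_cents2.
Qed.

Lemma center_sub_cosetpre_center (N : {group gT}) : N <| G ->
  'Z(G) \subset coset N @*^-1 'Z(G / N).
Proof.
move=> nsNG; rewrite sub_cosetpre_center // center_sub.
by have /commG1P-> := subsetIr G 'C(G); rewrite sub1G.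
Qed.

Lemma cosetpre_center_cfker (i : Iirr G) :
  coset (cfker ('chi_i)%R) @*^-1 'Z(G / cfker ('chi_i)%R)
    = ('Z(('chi[G]_i)%R))%CF.
Proof. by rewrite -cfcenter_eq_center quotientGK ?cfker_center_normal. Qed.

Lemma cosetpre_center_sub_cfcenter (N : {group gT}) (i : Iirr G) :
  N <| G -> N \subset cfker ('chi[G]_i)%R ->
  coset N @*^-1 'Z(G / N) \subset ('Z(('chi_i)%R))%CF.
Proof.
move=> nsNG sNK; rewrite -cosetpre_center_cfker.
have := subxx (coset N @*^-1 'Z(G / N)).
rewrite sub_cosetpre_center // => /andP[sZG sZGN].
by rewrite sub_cosetpre_center ?cfker_normal // sZG (subset_trans sZGN).
Qed.

End CenterPreimage.

Theorem theoremA (gT : finGroupType) (G N : {group gT}) :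
  ~~ abelian G -> N <| G ->
  Kgrp G \subset N \/ (N \subset 'Z(G) /\ 'Z(G / N) = 'Z(G) / N).
Proof.
move=> nabG nsNG; set ZN := coset N @*^-1 'Z(G / N).
have sZZN : 'Z(G) \subset ZN by exact: center_sub_cosetpre_center.
have [ltZZN | ] := boolP ('Z(G) \proper ZN).
  left; rewrite /Kgrp (negbTE nabG) -(cap_cfker_normal nsNG).
  apply: subset_trans (subsetIr _ _) _; apply/bigcapsP=> i sNK.
  apply: bigcap_inf.
  by rewrite (proper_sub_trans ltZZN) ?cosetpre_center_sub_cfcenter.
rewrite properE sZZN negbK => sZNZ.
have <- : ZN = 'Z(G) by apply/eqP; rewrite eqEsubset sZNZ.
by right; rewrite cosetpreK sub_cosetpre.
Qed.
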